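(* Let $\rho\in(0,\infty)$ and $\bar v\in(0,1)$. There exist constants $c_1,c_2>0$ (depending only on $\bar v$, $\rho$ and $q$) such that for all $y\in\mathbb Z^2$ and $l\in\mathbb Z_+$, $\mathbb P^\rho[h(y)>l]\le c_1e^{-c_2l}$, where $h(y)=\inf\{l\in\mathbb Z_+:\ \omega(W^\times_y\cap W^\times_{y+(l,l)})=0\}$.
   Context: Fix $q\in(0,1)$. $W$ is the set of two-sided paths $w:\mathbb Z\to\mathbb Z$ with $|w(n+1)-w(n)|\le1$; $P_x$ is the law on $W$ of a two-sided lazy simple random walk (steps $-1,0,1$ with probabilities $\frac{1-q}2,q,\frac{1-q}2$) with $w(0)=x$. Under $\mathbb P^\rho$, $\omega$ is a Poisson point process on $W$ with intensity $\rho\sum_xP_x$. Cones: $\angle(x,n)=(x,n)+\{(x',n')\in\mathbb Z_+^2: x'\ge\bar vn'\}$ and $\angle^{\mathrm{rev}}(x,n)=(x,n)+\{(x',n')\in\mathbb Z_-^2: x'<\bar vn'\}$ ($\mathbb Z_\pm$ include $0$). The trace of $w$ is $\{(w(n),n):n\in\mathbb Z\}$; $W^\times_y$ is the set of $w\in W$ whose trace intersects both $\angle(y)$ and $\angle^{\mathrm{rev}}(y)$. *)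

From HB Require Import structures.
From mathcomp Require Import all_boot all_order all_algebra.
From mathcomp Require Import all_classical all_reals all_analysis measurable_realfun.
Set Implicit Arguments. Unset Strict Implicit. Unset Printing Implicit Defensive.
Import Order.TTheory GRing.Theory Num.Theory.
Local Open Scope classical_set_scope.
Local Open Scope ring_scope.

(* int made a pointedType (point 0) so that the cylinder sigma-algebra applies *)
HB.instance Definition _ := isPointed.Build int 0.

Definition cylinders : set (set (int -> int)) :=
  fun A => exists (n a : int), A = [set w | w n = a].

Definition Path := g_sigma_algebraType cylinders.

Definition Wpaths : set Path := [set w | forall n : int, `|w (n + 1) - w n| <= 1].

Definition lazy_step {R : realType} (q : R) (z : int) : R :=
  if z == 0 then q else if (z == 1) || (z == -1) then (1 - q) / 2 else 0.

(* P_x : law of the two-sided lazy SRW with w(0) = x, characterised by its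
   finite-dimensional distributions on every window [m, m+N] containing 0. *)
Definition is_lazy_walk_law {R : realType} (q : R) (x : int)
    (Px : probability Path R) : Prop :=
  forall (m : int) (N : nat) (a : int -> int),
    m <= 0 -> 0 <= m + N%:Z ->
    Px [set w : Path | forall k : int, m <= k -> k <= m + N%:Z -> w k = a k]
    = ((if a 0 == x then 1 else 0) *
        \prod_(i < N) lazy_step q (a (m + i%:Z + 1) - a (m + i%:Z)))%:E.

Definition intensity {R : realType} (rho : R) (P : int -> probability Path R)
    (A : set Path) : \bar R :=
  (rho%:E * \esum_(x in [set: int]) P x A)%E.

Definition is_PPP {R : realType} {d : measure_display} {Omega : measurableType d}
    (PP : probability Omega R) (nu : set Path -> \bar R)
    (omega : Omega -> {measure set Path -> \bar R}) : Prop :=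
  (forall A : set Path, measurable A -> measurable_fun [set: Omega] ((fun o => omega o A) : Omega -> \bar R))
  /\
  (forall (A : set Path) (m : R), measurable A -> nu A = m%:E ->
     forall k : nat,
       PP [set o | omega o A = k%:R%:E] = (expR (- m) * m ^+ k / k`!%:R)%:E)
  /\ (forall A : set Path, measurable A -> nu A = +oo%E ->
       PP [set o | omega o A = +oo%E] = 1%E)
  /\
  (forall (n : nat) (A : 'I_n -> set Path) (k : 'I_n -> nat),
     (forall i, measurable (A i)) ->
     (forall i j, i != j -> A i `&` A j = set0) ->
     PP (\bigcap_(i in [set: 'I_n]) [set o | omega o (A i) = (k i)%:R%:E])
     = (\prod_(i < n) PP [set o | omega o (A i) = (k i)%:R%:E])%E).

Definition cone {R : realType} (vbar : R) (y : int * int) : set (int * int) :=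
  [set p | 0 <= p.1 - y.1 /\ 0 <= p.2 - y.2 /\
           vbar * (p.2 - y.2)%:~R <= (p.1 - y.1)%:~R].

Definition cone_rev {R : realType} (vbar : R) (y : int * int) : set (int * int) :=
  [set p | p.1 - y.1 <= 0 /\ p.2 - y.2 <= 0 /\
           (p.1 - y.1)%:~R < vbar * (p.2 - y.2)%:~R].

Definition trace (w : Path) : set (int * int) := [set (w n, n) | n in [set: int]].

Definition Wcross {R : realType} (vbar : R) (y : int * int) : set Path :=
  [set w | Wpaths w /\ trace w `&` cone vbar y !=set0
                    /\ trace w `&` cone_rev vbar y !=set0].

(* the event {h(y) > l}, with
   h(y) = inf { l in Z_+ : omega(W^x_y \cap W^x_{y+(l,l)}) = 0 }  (inf set0 = oo) *)
Definition h_gt {R : realType} {d : measure_display} {Omega : measurableType d}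
    (vbar : R) (omega : Omega -> {measure set Path -> \bar R})
    (y : int * int) (l : nat) : set Omega :=
  [set o | forall l' : nat, (l' <= l)%N ->
     omega o (Wcross vbar y `&` Wcross vbar (y.1 + l'%:Z, y.2 + l'%:Z)) != 0%E].

From HB Require Import structures.
From mathcomp Require Import all_boot all_order all_algebra.
From mathcomp Require Import all_classical all_reals all_analysis measurable_realfun.
From mathcomp Require Import zify ring lra.
From mathcomp Require finmap.
Set Implicit Arguments. Unset Strict Implicit. Unset Printing Implicit Defensive.
Import Order.TTheory GRing.Theory Num.Theory.
Local Open Scope classical_set_scope.
Local Open Scope ring_scope.

(* Since [omega] is Poisson, [P[h(y) > l] <= P[omega(A) <> 0] = 1 - exp(- nu A) <= nu A]
   for [A = W^x_y ∩ W^x_(y + (l, l))].  A path of [A] is strictly left of the reverse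
   cone of [y] at some time [y.2 - i] and right of the cone of [y + (l, l)] at time
   [y.2 + l + j], so over these [l + i + j] steps it advances by at least
   [l + vbar (i + j)].  For fixed increments the starting points [x] doing so form an
   integer interval, whose length is at most [exp (th * (1 + excess)) / th]; averaging
   over the increments turns this into the exponential moment [mgf(th) ^ (l + i + j)].
   For [th = vbar / 2] the rate [mgf(th) exp (- th vbar)] is below 1, and summing the
   geometric series over [i] and [j] gives [nu A <= C exp (- th (1 - vbar) l)]. *)

Lemma measurable_coord (n : int) (P : int -> Prop) :
  measurable [set w : Path | P (w n)].
Proof.
have -> : [set w : Path | P (w n)] =
    \bigcup_(a : int) ([set w : Path | w n = a] `&` [set _ | P a]).
  by apply/seteqP; split => [w Pw|w [a _ [/= <- //]]]; exists (w n).
apply: countable_bigcupT_measurable; first exact: countableP.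
move=> a; apply: measurableI; first by apply: sub_sigma_algebra; exists n, a.
case: (pselect (P a)) => Pa.
  by rewrite (_ : [set _ | P a] = setT) //; apply/seteqP; split.
by rewrite (_ : [set _ | P a] = set0) //; apply/seteqP; split.
Qed.

Lemma measurable_coord2 (n m : int) (P : int -> int -> Prop) :
  measurable [set w : Path | P (w n) (w m)].
Proof.
have -> : [set w : Path | P (w n) (w m)] =
    \bigcup_(a : int) ([set w : Path | w n = a] `&` [set w : Path | P a (w m)]).
  by apply/seteqP; split => [w Pw|w [a _ [/= <- //]]]; exists (w n).
apply: countable_bigcupT_measurable; first exact: countableP.
move=> a; apply: measurableI; first exact: (measurable_coord n (eq^~ a)).
exact: (measurable_coord m (P a)).
Qed.

Lemma bigcap_int_measurable (F : int -> set Path) :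
  (forall n, measurable (F n)) -> measurable (\bigcap_(n : int) F n).
Proof.
move=> mF; rewrite -[X in measurable X]setCK setC_bigcap.
apply/measurableC/countable_bigcupT_measurable; first exact: countableP.
by move=> n; apply: measurableC.
Qed.

Lemma measurable_Wpaths : measurable Wpaths.
Proof.
have -> : Wpaths = \bigcap_(n : int) [set w : Path | `|w (n + 1) - w n| <= 1].
  by apply/seteqP; split => [w Hw n _|w Hw n] //=; apply: Hw.
by apply: bigcap_int_measurable => n; apply: (measurable_coord2 _ _ (fun a b => `|a - b| <= 1)).
Qed.

Lemma measurable_trace_meets (C : set (int * int)) :
  measurable [set w : Path | trace w `&` C !=set0].
Proof.
have -> : [set w : Path | trace w `&` C !=set0] =
    \bigcup_(n : int) [set w : Path | C (w n, n)].
  apply/seteqP; split => [w [_ [[n _ <-] Cn]]|w [n _ Cn]]; first by exists n.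
  by exists (w n, n); split => //; exists n.
apply: countable_bigcupT_measurable; first exact: countableP.
by move=> n; apply: (measurable_coord n (fun a => C (a, n))).
Qed.

Lemma measurable_Wcross (R : realType) (vbar : R) (y : int * int) :
  measurable (Wcross vbar y).
Proof.
by apply: measurableI; [exact: measurable_Wpaths|apply: measurableI; exact: measurable_trace_meets].
Qed.

Definition Wcross_pair {R : realType} (vbar : R) (y : int * int) (l : nat) : set Path :=
  Wcross vbar y `&` Wcross vbar (y.1 + l%:Z, y.2 + l%:Z).

Lemma measurable_Wcross_pair (R : realType) (vbar : R) y l :
  measurable (Wcross_pair vbar y l).
Proof. by apply: measurableI; apply: measurable_Wcross. Qed.

Definition step_of (t : 'I_3) : int := (t : nat)%:Z - 1.

Definition step_sum {N} (s : {ffun 'I_N -> 'I_3}) (i : nat) : int :=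
  \sum_(j < N | (j < i)%N) step_of (s j).

(* The path with [w 0 = x] whose increments on the window [m, m + N] are
   [step_of (s i)]; its values outside the window are irrelevant. *)
Definition window_path (m x : int) {N} (s : {ffun 'I_N -> 'I_3}) (k : int) : int :=
  x + (step_sum s `|k - m|%N - step_sum s `|- m|%N).

Definition window_cyl (m : int) (N : nat) (a : int -> int) : set Path :=
  [set w : Path | forall k : int, m <= k -> k <= m + N%:Z -> w k = a k].

Definition step_weight {R : realType} (q : R) (t : 'I_3) : R := lazy_step q (step_of t).

Lemma step_ofK : injective step_of.
Proof. by move=> a b /addIr /eqP; rewrite eqz_nat => /eqP /val_inj. Qed.

Lemma step_sumS N (s : {ffun 'I_N -> 'I_3}) (i : 'I_N) :
  step_sum s i.+1 = step_sum s i + step_of (s i).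
Proof.
rewrite /step_sum (bigD1 i) //= addrC; congr (_ + _).
apply: eq_bigl => j; rewrite ltnS; apply/andP/idP => [[]|ji].
  by rewrite leq_eqVlt => /orP[/eqP/val_inj->|]//; rewrite eqxx.
by split; [exact: ltnW|rewrite neq_ltn ji].
Qed.

Lemma step_sumB N (s : {ffun 'I_N -> 'I_3}) (i0 i1 : nat) : (i0 <= i1)%N ->
  step_sum s i1 - step_sum s i0 = \sum_(k < N | (i0 <= k < i1)%N) step_of (s k).
Proof.
move=> h; rewrite /step_sum (bigID (fun k : 'I_N => (k < i0)%N)) /=.
have -> : \sum_(i < N | (i < i1)%N && (i < i0)%N) step_of (s i) =
          \sum_(i < N | (i < i0)%N) step_of (s i).
  by apply: eq_bigl => k; apply/andP/idP => [[]//|hk]; split=> //; lia.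
by rewrite addrC addrK; apply: eq_bigl => k; apply/andP/andP => [] []; lia.
Qed.

Lemma window_path0 m x N (s : {ffun 'I_N -> 'I_3}) : window_path m x s 0 = x.
Proof. by rewrite /window_path sub0r subrr addr0. Qed.

Lemma window_pathE m x N (s : {ffun 'I_N -> 'I_3}) k :
  window_path m x s k = x + window_path m 0 s k.
Proof. by rewrite /window_path add0r. Qed.

Lemma window_path_step m x N (s : {ffun 'I_N -> 'I_3}) (i : 'I_N) :
  window_path m x s (m + i%:Z + 1) - window_path m x s (m + i%:Z) = step_of (s i).
Proof.
rewrite /window_path.
have -> : m + i%:Z + 1 - m = (i.+1)%:Z by lia.
have -> : m + i%:Z - m = i%:Z by lia.
rewrite !absz_nat step_sumS; lia.
Qed.

Lemma measurable_window_cyl m N a : measurable (window_cyl m N a).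
Proof.
have -> : window_cyl m N a =
    \bigcap_(k : int) [set w : Path | m <= k -> k <= m + N%:Z -> w k = a k].
  by apply/seteqP; split => [w Hw k _|w Hw k] //=; apply: Hw.
apply: bigcap_int_measurable => k.
exact: (measurable_coord k (fun v => m <= k -> k <= m + N%:Z -> v = a k)).
Qed.

Lemma window_cyl_path_disjoint m x N (s s' : {ffun 'I_N -> 'I_3}) (w : Path) :
  window_cyl m N (window_path m x s) w -> window_cyl m N (window_path m x s') w ->
  s = s'.
Proof.
move=> ws ws'; apply/ffunP => i; apply: step_ofK.
have e k : m <= k -> k <= m + N%:Z -> window_path m x s k = window_path m x s' k.
  by move=> ? ?; rewrite -ws // -ws'.
have iN := ltn_ord i.
by rewrite -(window_path_step m x s i) -(window_path_step m x s' i) !e //; lia.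
Qed.

Lemma step_weight_ge0 (R : realType) (q : R) t : 0 <= q <= 1 -> 0 <= step_weight q t.
Proof. by move=> /andP[q0 q1]; rewrite /step_weight /lazy_step; do 2 case: ifP => // _; lra. Qed.

Lemma step_weight_sum (R : realType) (q : R) : \sum_(t < 3) step_weight q t = 1.
Proof. by rewrite !big_ord_recr big_ord0 /= /step_weight /step_of /lazy_step /= add0r; lra. Qed.

Lemma sum_prod_step_weight (R : realType) (q : R) N :
  \sum_(s : {ffun 'I_N -> 'I_3}) \prod_(i < N) step_weight q (s i) = 1.
Proof.
rewrite -(bigA_distr_bigA (fun _ t => step_weight q t)) /=.
by rewrite (eq_bigr (fun=> 1)) ?prodr_const ?expr1n // => i _; exact: step_weight_sum.
Qed.

Lemma fsum_predE (R : realType) (T : finType) (P : pred T) (F : T -> \bar R) :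
  \sum_(s \in [set s | P s]) F s = (\sum_(s | P s) F s)%E.
Proof.
rewrite (fsbigE (enum P)) ?enum_uniq //.
- rewrite big_enum_cond /=; apply: eq_bigl => s.
  by apply/andP/idP => [[]//|Ps]; split; rewrite ?in_setE.
- by move=> s /=; rewrite mem_enum.
- by move=> i /= Pi /negP[]; rewrite mem_enum.
Qed.

Section LazyWalkWindow.
Variables (R : realType) (q : R) (x : int) (Px : probability Path R).
Hypothesis Px_law : is_lazy_walk_law q x Px.
Variables (m : int) (N : nat).
Hypotheses (m_le0 : m <= 0) (window_ge0 : 0 <= m + N%:Z).

Let cyl (s : {ffun 'I_N -> 'I_3}) := window_cyl m N (window_path m x s).

Lemma window_cyl_prob s : Px (cyl s) = (\prod_(i < N) step_weight q (s i))%:E.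
Proof.
rewrite /cyl /window_cyl Px_law // window_path0 eqxx mul1r; congr (_%:E).
by apply: eq_bigr => i _; rewrite window_path_step.
Qed.

Lemma prob_window_cyl_bigcup (Q : pred {ffun 'I_N -> 'I_3}) :
  Px (\bigcup_(s in [set s | Q s]) cyl s) =
  (\sum_(s | Q s) \prod_(i < N) step_weight q (s i))%:E.
Proof.
rewrite measure_fin_bigcup //; first last.
- by move=> s _; exact: measurable_window_cyl.
- by move=> s s' _ _ [w [ws ws']]; exact: window_cyl_path_disjoint ws ws'.
- exact: finite_finset.
by rewrite fsum_predE -sumEFin; apply: eq_bigr => s _; exact: window_cyl_prob.
Qed.

(* The cylinders of all step sequences together carry full mass. *)
Lemma prob_le_window_sum (G : set Path) (Q : pred {ffun 'I_N -> 'I_3}) :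
  measurable G -> (forall s w, cyl s w -> G w -> Q s) ->
  (Px G <= (\sum_(s | Q s) \prod_(i < N) step_weight q (s i))%:E)%E.
Proof.
move=> mG GQ; pose U (Q' : pred _) := \bigcup_(s in [set s | Q' s]) cyl s.
rewrite -prob_window_cyl_bigcup -/(U Q).
have mU Q' : measurable (U Q').
  by apply: fin_bigcup_measurable => [|s _]; [exact: finite_finset|exact: measurable_window_cyl].
have U_full : Px (~` U predT) = 0%E.
  rewrite probability_setC // /U prob_window_cyl_bigcup.
  by rewrite (eq_bigl xpredT) // sum_prod_step_weight subee.
have GU : G `<=` U Q `|` ~` U predT.
  move=> w Gw; case: (pselect (U predT w)) => [[s _ ws]|]; last by right.
  by left; exists s => //; exact: GQ ws Gw.
apply: le_trans (le_measure _ _ _ GU) _; rewrite ?inE //.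
  by apply: measurableU => //; exact: measurableC.
apply: le_trans (measureU2 _ _ _) _ => //; first exact: measurableC.
by rewrite [X in (_ + X)%E]U_full adde0.
Qed.

End LazyWalkWindow.

Lemma count_int_itv_le (R : realType) (X : seq int) (a b : R) : uniq X ->
  \sum_(x <- X) (if (a <= x%:~R) && (x%:~R < b) then 1 else 0 : R)
  <= Num.max 0 (b - a + 1).
Proof.
move=> uX; pose z0 := Num.ceil a; pose c := Num.ceil (b - a).
have shift x : (a <= x%:~R) && (x%:~R < b) -> (0 <= x - z0) && (x - z0 < c).
  case/andP => ax xb; apply/andP; split; first by rewrite subr_ge0 /z0 ceil_le_int.
  by rewrite /c ceil_gt_int rmorphB /=; have := ceil_ge a; rewrite -/z0; lra.
have [c_le0|c_gt0] := leP c 0.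
  by rewrite big1_seq ?le_max ?lexx // => x _; case: ifP => // /shift; lia.
have in_slot x : (if (a <= x%:~R) && (x%:~R < b) then 1 else 0 : R)
    <= \sum_(k < `|c|%N) (if x == z0 + k%:Z then 1 else 0).
  case: ifP => [/shift /andP[h0 h1]|_]; last by apply: sumr_ge0 => k _; case: ifP.
  have hk : (`|x - z0| < `|c|)%N by lia.
  rewrite (bigD1 (Ordinal hk)) //= -[leLHS]addr0 lerD //; first by rewrite ifT //; apply/eqP; lia.
  by apply: sumr_ge0 => k _; case: ifP.
apply: le_trans (ler_sum _ (fun x _ => in_slot x)) _; rewrite exchange_big /=.
apply: (@le_trans _ _ (\sum_(k < `|c|%N) (1 : R))).
  apply: ler_sum => k _; rewrite -big_mkcond /= -(natr_sum _ _ _ (fun=> 1%N)) sum1_count.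
  by rewrite (count_uniq_mem _ uX) (ler_nat _ _ 1) leq_b1.
rewrite sumr_const card_ord natr_absz gtr0_norm // le_max; apply/orP; right.
by have := ceil_itv (b - a); rewrite -/c rmorphB /= => /andP[h _]; lra.
Qed.

Lemma max0_le_expR_div (R : realType) (th u : R) : 0 < th ->
  Num.max 0 u <= expR (th * u) / th.
Proof.
move=> th0; rewrite ge_max; apply/andP; split.
  by apply: divr_ge0; [exact: expR_ge0|exact: ltW].
by rewrite ler_pdivlMr //; have := expR_ge1Dx (th * u); nra.
Qed.

Definition step_mgf {R : realType} (q th : R) : R :=
  \sum_(t < 3) step_weight q t * expR (th * (step_of t)%:~R).

Lemma sum_prod_step_weight_expR (R : realType) (q th : R) N i0 i1 :
  (i0 <= i1 <= N)%N ->
  \sum_(s : {ffun 'I_N -> 'I_3})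
     (\prod_(k < N) step_weight q (s k)) * expR (th * (step_sum s i1 - step_sum s i0)%:~R)
  = step_mgf q th ^+ (i1 - i0).
Proof.
move=> /andP[i01 i1N].
pose inside (k : 'I_N) := (i0 <= k < i1)%N.
pose F k t := step_weight q t * (if inside k then expR (th * (step_of t)%:~R) else 1).
have factor (s : {ffun 'I_N -> 'I_3}) :
  (\prod_(k < N) step_weight q (s k)) * expR (th * (step_sum s i1 - step_sum s i0)%:~R)
  = \prod_(k < N) F k (s k).
  rewrite step_sumB // rmorph_sum mulr_sumr expR_sum (big_mkcond inside) -big_split /=.
  by apply: eq_bigr => k _; rewrite /F; case: ifP.
rewrite (eq_bigr _ (fun s _ => factor s)) -(bigA_distr_bigA F) /=.
have sumF k : \sum_(t < 3) F k t = if inside k then step_mgf q th else 1.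
  rewrite /F /step_mgf; case: ifP => _ //.
  by under eq_bigr do rewrite mulr1; exact: step_weight_sum.
rewrite (eq_bigr _ (fun k _ => sumF k)).
rewrite -(big_mkord xpredT (fun k => if (i0 <= k < i1)%N then step_mgf q th else 1)).
rewrite (@big_cat_nat _ _ _ i0 0 N) ?(leq_trans i01) //= (@big_cat_nat _ _ _ i1 i0 N) //=.
rewrite big1_seq => [|k]; last by rewrite mem_index_iota => /andP[_ hk]; rewrite ifF //; lia.
rewrite [X in _ * (_ * X)]big1_seq => [|k]; last first.
  by rewrite mem_index_iota => /andP[_ hk]; rewrite ifF //; apply/negbTE/negP => /andP[]; lia.
rewrite mul1r mulr1 -(prodr_const_nat i0 i1); apply: eq_big_seq => k.
by rewrite mem_index_iota => hk; rewrite ifT.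
Qed.

Definition below_then_above {R : realType} (n0 : int) (b : R) (n1 : int) (a : R) : set Path :=
  [set w : Path | (w n0)%:~R < b /\ a <= (w n1)%:~R].

Lemma measurable_below_then_above (R : realType) n0 (b : R) n1 (a : R) :
  measurable (below_then_above n0 b n1 a).
Proof. exact: (measurable_coord2 n0 n1 (fun u v => u%:~R < b /\ a <= v%:~R)). Qed.

(* For fixed increments the admissible starting points form an integer interval. *)
Lemma count_starts_le (R : realType) (th : R) m N (s : {ffun 'I_N -> 'I_3})
    n0 (b : R) n1 (a : R) (X : seq int) : 0 < th -> uniq X ->
  \sum_(x <- X) (if ((window_path m x s n0)%:~R < b) && (a <= (window_path m x s n1)%:~R)
                 then 1 else 0)
  <= expR (th * (b - a + 1 + (window_path m 0 s n1 - window_path m 0 s n0)%:~R)) / th.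
Proof.
move=> th0 uX.
set D0 := window_path m 0 s n0; set D1 := window_path m 0 s n1.
have -> : \sum_(x <- X) (if ((window_path m x s n0)%:~R < b) && (a <= (window_path m x s n1)%:~R)
                 then 1 else 0) =
    \sum_(x <- X) (if (a - D1%:~R <= x%:~R) && (x%:~R < b - D0%:~R) then 1 else 0 : R).
  apply: eq_bigr => x _; rewrite !(window_pathE m x) -/D0 -/D1 !rmorphD /=.
  by congr (if _ then _ else _); apply/andP/andP => -[h1 h2]; split; lra.
apply: le_trans (count_int_itv_le _ _ uX) _; apply: le_trans (max0_le_expR_div _ th0) _.
by rewrite rmorphB /= le_eqVlt; apply/orP; left; apply/eqP; congr (expR (th * _) / th); lra.
Qed.

Lemma exists_window (n0 n1 : int) :
  exists (m : int) (N : nat), [/\ m <= n0, m <= 0, n1 <= m + N%:Z & 0 <= m + N%:Z].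
Proof. by exists (- `|n0|%:Z), (`|n0| + `|n1|)%N; split; lia. Qed.

Lemma sum_prob_below_then_above_le (R : realType) (q th : R) (P : int -> probability Path R)
    n0 (b : R) n1 (a : R) (X : seq int) :
  (forall x, is_lazy_walk_law q x (P x)) -> 0 <= q <= 1 -> 0 < th -> n0 <= n1 -> uniq X ->
  (\sum_(x <- X) P x (below_then_above n0 b n1 a) <=
   (expR (th * (b - a + 1)) / th * step_mgf q th ^+ `|n1 - n0|%N)%:E)%E.
Proof.
move=> P_law q01 th0 n01 uX.
have [m [N [mn0 m0 n1N N0]]] := exists_window n0 n1.
pose W (s : {ffun 'I_N -> 'I_3}) := \prod_(k < N) step_weight q (s k).
pose Q x (s : {ffun 'I_N -> 'I_3}) :=
  ((window_path m x s n0)%:~R < b) && (a <= (window_path m x s n1)%:~R).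
have Px_le x : (P x (below_then_above n0 b n1 a) <= (\sum_(s | Q x s) W s)%:E)%E.
  apply: (prob_le_window_sum (P_law x) m0 N0); first exact: measurable_below_then_above.
  by move=> s w ws [wb aw]; rewrite /Q -!ws ?wb ?aw //; lia.
apply: le_trans (@lee_sum _ _ _ _ X xpredT (fun x _ => Px_le x)) _; rewrite sumEFin lee_fin.
have -> : \sum_(x <- X) \sum_(s | Q x s) W s =
    \sum_s W s * \sum_(x <- X) (if Q x s then 1 else 0).
  under eq_bigr do rewrite big_mkcond /=.
  rewrite exchange_big /=; apply: eq_bigr => s _; rewrite mulr_sumr.
  by apply: eq_bigr => x _; case: ifP; rewrite ?mulr1 ?mulr0.
have W_ge0 s : 0 <= W s by apply: prodr_ge0 => k _; exact: step_weight_ge0.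
have count_le s := ler_wpM2l (W_ge0 s) (count_starts_le m s n0 b n1 a th0 uX).
apply: le_trans (ler_sum _ (fun s _ => count_le s)) _.
pose i0 := `|n0 - m|%N; pose i1 := `|n1 - m|%N.
have incr s : window_path m 0 s n1 - window_path m 0 s n0 = step_sum s i1 - step_sum s i0.
  by rewrite /window_path; ring.
under eq_bigr do rewrite incr.
have -> : \sum_s W s * (expR (th * (b - a + 1 + (step_sum s i1 - step_sum s i0)%:~R)) / th) =
    expR (th * (b - a + 1)) / th *
    \sum_s W s * expR (th * (step_sum s i1 - step_sum s i0)%:~R).
  by rewrite mulr_sumr; apply: eq_bigr => s _; rewrite mulrDr expRD; ring.
rewrite (sum_prod_step_weight_expR q th (i0 := i0) (i1 := i1)); last by lia.
by rewrite (_ : (i1 - i0)%N = `|n1 - n0|%N) //; lia.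
Qed.

Section GeometricSeries.
Local Open Scope ereal_scope.
Variables (R : realType) (r : R).
Hypotheses (r_gt0 : (0 < r)%R) (r_lt1 : (r < 1)%R).

Lemma nneseries_geometric_le (a : R) : (0 <= a)%R ->
  \sum_(0 <= j <oo) (a * r ^+ j)%:E <= (a / (1 - r))%:E.
Proof.
move=> a0; apply: lime_le.
  by apply: is_cvg_nneseries => n _ _; rewrite lee_fin mulr_ge0 // exprn_ge0 // ltW.
apply: nearW => n; rewrite sumEFin lee_fin.
have r_norm : (`|r| < 1)%R by rewrite ger0_norm // ltW.
exact: (@geometric_le_lim R n a r a0 r_gt0 r_norm).
Qed.

Lemma nneseries2_geometric_le (a : R) : (0 <= a)%R ->
  \sum_(0 <= i <oo) \sum_(0 <= j <oo) (a * r ^+ i * r ^+ j)%:E <= (a / (1 - r) / (1 - r))%:E.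
Proof.
move=> a0; have r_ge0 : (0 <= r)%R by exact: ltW.
have inner i : \sum_(0 <= j <oo) (a * r ^+ i * r ^+ j)%:E <= (a / (1 - r) * r ^+ i)%:E.
  apply: le_trans (nneseries_geometric_le _) _; first by rewrite mulr_ge0 ?exprn_ge0.
  by rewrite lee_fin le_eqVlt; apply/orP; left; apply/eqP; ring.
apply: le_trans (nneseries_geometric_le _); last by rewrite divr_ge0 // subr_ge0 ltW.
apply: lee_nneseries => [i _ _|i _]; last exact: inner.
by apply: nneseries_ge0 => j _ _; rewrite lee_fin !mulr_ge0 ?exprn_ge0.
Qed.

End GeometricSeries.

Lemma esum_int_le (R : realType) (f : int -> \bar R) (B : \bar R) :
  (forall X : seq int, uniq X -> (\sum_(x <- X) f x <= B)%E) ->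
  (\esum_(x in [set: int]) f x <= B)%E.
Proof.
move=> H; apply: ge_ereal_sup => _ [S [finS _] <-].
by rewrite fsbig_finite //=; apply: H; exact: finmap.fset_uniq.
Qed.

(* The path is left of the reverse cone of [y] at time [y.2 - i] and right of
   the cone of [y + (l, l)] at time [y.2 + l + j]. *)
Definition crossing_event {R : realType} (vbar : R) (y : int * int) (l i j : nat) : set Path :=
  below_then_above (y.2 - i%:Z) (y.1%:~R - vbar * i%:R)
                   (y.2 + l%:Z + j%:Z) (y.1%:~R + l%:R + vbar * j%:R).

Lemma Wcross_pair_sub_crossing (R : realType) (vbar : R) y l :
  Wcross_pair vbar y l `<=` \bigcup_(i : nat) \bigcup_(j : nat) crossing_event vbar y l i j.
Proof.
move=> w [[_ [_ [_ [[n _ <-] /= [h1 [h2 h3]]]]]] [_ [[_ [[n' _ <-] /= [g1 [g2 g3]]]] _]]].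
rewrite /= in h1 h2 h3 g1 g2 g3.
exists (absz (y.2 - n)%R) => //; exists (absz (n' - (y.2 + l%:Z))%R) => //.
rewrite /crossing_event /below_then_above /=.
have -> : y.2 - (absz (y.2 - n)%R)%:Z = n by rewrite gez0_abs; lia.
have -> : y.2 + l%:Z + (absz (n' - (y.2 + l%:Z))%R)%:Z = n' by rewrite gez0_abs; lia.
have natrZ (k : nat) : (k%:R : R) = (k%:Z)%:~R by [].
rewrite !natrZ !gez0_abs; try lia.
split; first by move: h3; rewrite !rmorphB /=; lra.
by move: g3; rewrite !rmorphB !rmorphD /=; lra.
Qed.

Lemma prob_Wcross_pair_le (R : realType) (vbar : R) (Px : probability Path R) y l :
  (Px (Wcross_pair vbar y l) <=
   \sum_(0 <= i <oo) \sum_(0 <= j <oo) Px (crossing_event vbar y l i j))%E.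
Proof.
have mF i j : measurable (crossing_event vbar y l i j) by exact: measurable_below_then_above.
have mFi i : measurable (\bigcup_(j : nat) crossing_event vbar y l i j).
  by apply: bigcupT_measurable => j; exact: mF.
have := measure_sigma_subadditive Px mFi (measurable_Wcross_pair vbar y l)
  (@Wcross_pair_sub_crossing R vbar y l).
move=> /le_trans; apply.
apply: lee_nneseries => [i _ _|i _]; first exact: measure_ge0.
exact: (measure_sigma_subadditive Px (mF i) (mFi i) (@subset_refl _ _)).
Qed.

Section CrossingIntensity.
Variables (R : realType) (q th vbar : R) (P : int -> probability Path R).
Hypotheses (P_law : forall x, is_lazy_walk_law q x (P x)) (q01 : 0 <= q <= 1) (th_gt0 : 0 < th).
Let r := step_mgf q th * expR (- (th * vbar)).
Hypotheses (r_gt0 : 0 < r) (r_lt1 : r < 1).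
Let K (l : nat) := expR th / th * expR (- (th * (1 - vbar)) * l%:R).

Let K_ge0 l : 0 <= K l.
Proof. by rewrite /K !mulr_ge0 ?expR_ge0 ?invr_ge0 ?ltW. Qed.

Lemma sum_prob_crossing_le y l i j (X : seq int) : uniq X ->
  (\sum_(x <- X) P x (crossing_event vbar y l i j) <= (K l * r ^+ i * r ^+ j)%:E)%E.
Proof.
move=> uX.
apply: le_trans (@sum_prob_below_then_above_le R q th P (y.2 - i%:Z) _ (y.2 + l%:Z + j%:Z) _ X
                   P_law q01 th_gt0 _ uX) _; first by lia.
rewrite lee_fin (_ : `|_|%N = (l + i + j)%N); last by lia.
have expR_split : expR (th * (y.1%:~R - vbar * i%:R - (y.1%:~R + l%:R + vbar * j%:R) + 1)) =
    expR th * expR (- (th * (1 - vbar)) * l%:R) *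
    expR (l%:R * - (th * vbar)) * expR (i%:R * - (th * vbar)) * expR (j%:R * - (th * vbar)).
  by rewrite -!expRD; congr expR; ring.
have -> : expR (th * (y.1%:~R - vbar * i%:R - (y.1%:~R + l%:R + vbar * j%:R) + 1)) / th *
    step_mgf q th ^+ (l + i + j) = K l * r ^+ l * r ^+ i * r ^+ j.
  by rewrite expR_split /K /r !exprD !exprMn -!expRM_natl; ring.
rewrite (_ : K l * _ * _ * _ = r ^+ l * (K l * r ^+ i * r ^+ j)); last by ring.
have r_ge0 : 0 <= r by exact: ltW.
apply: ler_piMl; first by rewrite 2?mulr_ge0 ?K_ge0 // exprn_ge0.
exact: exprn_ile1 r_ge0 (ltW r_lt1).
Qed.

Lemma esum_prob_Wcross_pair_le y l :
  (\esum_(x in [set: int]) P x (Wcross_pair vbar y l) <= (K l / (1 - r) / (1 - r))%:E)%E.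
Proof.
apply: esum_int_le => X uX.
apply: le_trans (@lee_sum _ _ _ _ X xpredT (fun x _ => prob_Wcross_pair_le vbar (P x) y l)) _.
apply: le_trans (nneseries2_geometric_le r_gt0 r_lt1 (K_ge0 l)).
rewrite -nneseries_sum; last by move=> x i _; apply: nneseries_ge0 => j _ _; exact: measure_ge0.
apply: lee_nneseries => [i _ _|i _].
  by apply: sume_ge0 => x _; apply: nneseries_ge0 => j _ _; exact: measure_ge0.
rewrite -nneseries_sum; last by move=> x j _; exact: measure_ge0.
apply: lee_nneseries => [j _ _|j _]; first by apply: sume_ge0 => x _; exact: measure_ge0.
exact: sum_prob_crossing_le.
Qed.

End CrossingIntensity.

Lemma step_mgfE (R : realType) (q th : R) :
  step_mgf q th = q + (1 - q) / 2 * (expR th + expR (- th)).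
Proof.
rewrite /step_mgf !big_ord_recr big_ord0 /= /step_weight /step_of /lazy_step /=.
by rewrite add0r !mulr1 mulr0 expR0 mulrN1; ring.
Qed.

(* [expR th + expR (- th) - 2 = expR (- th) * (expR th - 1) ^+ 2] and
   [expR th - 1 <= th * expR th <= 2 * th] for [th <= 1/2]. *)
Lemma expR_add_expRN_le (R : realType) (th : R) : 0 <= th <= 1 / 2 ->
  expR th + expR (- th) - 2 <= 2 * th ^+ 2.
Proof.
move=> /andP[th0 th1].
set e := expR th; set e' := expR (- th).
have ee' : e * e' = 1 by rewrite /e /e' -expRD subrr expR0.
have e_gt0 : 0 < e := expR_gt0 _.
have e'_gt0 : 0 < e' := expR_gt0 _.
have e'_ge : 1 - th <= e' by have := expR_ge1Dx (- th); rewrite /e'; lra.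
have e_ge1 : 1 <= e by have := expR_ge1Dx th; rewrite -/e; lra.
have e_le2 : e <= 2.
  have : e * (1 - th) <= e * e' by apply: ler_wpM2l => //; exact: ltW.
  by rewrite ee'; nra.
have e_sub1 : e - 1 <= th * e.
  have : e * (1 - e') <= e * th by apply: ler_wpM2l; [exact: ltW|lra].
  by rewrite mulrBr mulr1 ee'; lra.
have -> : e + e' - 2 = e' * (e - 1) ^+ 2.
  by rewrite !expr2; transitivity (e * e' * e - 2 * (e * e') + e'); [rewrite ee'|]; ring.
have : e' * (e - 1) ^+ 2 <= e' * (th * e) ^+ 2.
  by apply: ler_wpM2l; [exact: ltW|rewrite !expr2; nra].
have -> : e' * (th * e) ^+ 2 = th ^+ 2 * e * (e * e') by ring.
rewrite ee' mulr1 => /le_trans; apply.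
by rewrite [leRHS]mulrC; apply: ler_wpM2l => //; exact: sqr_ge0.
Qed.

(* With [th = vbar / 2]: [step_mgf q th <= 1 + (1 - q) th ^ 2 < 1 + th vbar <= expR (th vbar)]. *)
Lemma step_mgf_decay (R : realType) (q vbar : R) : 0 < q < 1 -> 0 < vbar < 1 ->
  0 < step_mgf q (vbar / 2) * expR (- (vbar / 2 * vbar)) < 1.
Proof.
move=> /andP[q0 q1] /andP[v0 v1]; set th := vbar / 2.
have th0 : 0 < th by rewrite /th; lra.
have vbarE : vbar = 2 * th by rewrite /th; field.
have cosh_le := @expR_add_expRN_le R th.
have mgf_le : step_mgf q th <= 1 + (1 - q) * th ^+ 2.
  rewrite step_mgfE.
  have : (1 - q) / 2 * (expR th + expR (- th) - 2) <= (1 - q) / 2 * (2 * th ^+ 2).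
    by apply: ler_wpM2l; [lra|apply: cosh_le; apply/andP; split; rewrite /th; lra].
  lra.
have mgf_gt0 : 0 < step_mgf q th.
  by rewrite step_mgfE; have := expR_gt0 th; have := expR_gt0 (- th); nra.
rewrite mulr_gt0 ?expR_gt0 //= expRN ltr_pdivrMr ?expR_gt0 // mul1r.
apply: le_lt_trans mgf_le _; apply: lt_le_trans (expR_ge1Dx _).
by rewrite vbarE expr2; nra.
Qed.

Section PoissonCounts.
Variables (R : realType) (d : measure_display) (Omega : measurableType d).
Variables (PP : probability Omega R) (nu : set Path -> \bar R).
Variable (omega : Omega -> {measure set Path -> \bar R}).
Hypothesis omega_PPP : is_PPP PP nu omega.

Lemma setC_count_eq0 (A : set Path) :
  ~` [set o | omega o A = 0%E] = [set o | omega o A != 0%E].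
Proof. by apply/seteqP; split => o /= /eqP. Qed.

Lemma measurable_count_eq0 (A : set Path) :
  measurable A -> measurable [set o | omega o A = 0%E].
Proof.
move=> mA; have := omega_PPP.1 A mA measurableT [set 0%E] (emeasurable_set1 _).
by rewrite setTI.
Qed.

Lemma measurable_count_neq0 (A : set Path) :
  measurable A -> measurable [set o | omega o A != 0%E].
Proof. by move=> mA; rewrite -setC_count_eq0; apply/measurableC/measurable_count_eq0. Qed.

Lemma prob_count_neq0_le (A : set Path) (m : R) : measurable A -> nu A = m%:E ->
  (PP [set o | omega o A != 0%E] <= m%:E)%E.
Proof.
move=> mA nuA; have [_ [poisson _]] := omega_PPP.
rewrite -setC_count_eq0 probability_setC; last exact: measurable_count_eq0.
have := poisson A m mA nuA 0%N; rewrite expr0 mulr1 fact0 divr1 => ->.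
by rewrite -EFinB lee_fin; have := expR_ge1Dx (- m); lra.
Qed.

Lemma measurable_h_gt (vbar : R) y l : measurable (h_gt vbar omega y l).
Proof.
have -> : h_gt vbar omega y l =
    \bigcap_(l' in [set l' | (l' <= l)%N]) [set o | omega o (Wcross_pair vbar y l') != 0%E].
  by [].
apply: bigcap_measurable => [|l' _]; first by exists 0%N.
by apply: measurable_count_neq0; exact: measurable_Wcross_pair.
Qed.

End PoissonCounts.

Theorem lemma4p3 (R : realType) (q rho vbar : R) :
  0 < q -> q < 1 -> 0 < rho -> 0 < vbar -> vbar < 1 ->
  exists c1 c2 : R, 0 < c1 /\ 0 < c2 /\
    forall (P : int -> probability Path R),
      (forall x, is_lazy_walk_law q x (P x)) ->
    forall (d : measure_display) (Omega : measurableType d)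
           (PP : probability Omega R)
           (omega : Omega -> {measure set Path -> \bar R}),
      is_PPP PP (intensity rho P) omega ->
    forall (y : int * int) (l : nat),
      (PP (h_gt vbar omega y l) <= (c1 * expR (- c2 * l%:R))%:E)%E.
Proof.
move=> q0 q1 rho0 v0 v1; set th := vbar / 2.
set r := step_mgf q th * expR (- (th * vbar)).
have /andP[r0 r1] : 0 < r < 1 by apply: step_mgf_decay; apply/andP.
have th0 : 0 < th by rewrite /th; lra.
have r1' : 0 < 1 - r by lra.
exists (rho * (expR th / th) / (1 - r) / (1 - r)), (th * (1 - vbar)); split.
  by rewrite !divr_gt0 // mulr_gt0 // divr_gt0 // expR_gt0.
split; first by rewrite mulr_gt0 // subr_gt0.
move=> P P_law d Omega PP omega omega_PPP y l.
have q01 : 0 <= q <= 1 by rewrite !ltW.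
set A := Wcross_pair vbar y l.
have mA : measurable A by exact: measurable_Wcross_pair.
have nu_le : (intensity rho P A <= (rho * (expR th / th * expR (- (th * (1 - vbar)) * l%:R)
                                         / (1 - r) / (1 - r)))%:E)%E.
  rewrite /intensity EFinM; apply: lee_wpmul2l; first by rewrite lee_fin ltW.
  exact: esum_prob_Wcross_pair_le P_law q01 th0 r0 r1 y l.
have nu_fin : intensity rho P A = (fine (intensity rho P A))%:E.
  rewrite fineK // ge0_fin_numE; first exact: le_lt_trans nu_le (ltey _).
  apply: mule_ge0; first by rewrite lee_fin ltW.
  by apply: esum_ge0 => x _; exact: measure_ge0.
apply: (@le_trans _ _ (PP [set o | omega o A != 0%E])).
  apply: (le_measure PP); rewrite ?inE.
  - exact: measurable_h_gt omega_PPP vbar y l.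
  - exact: measurable_count_neq0 omega_PPP _ mA.
  - by move=> o /(_ l (leqnn l)).
apply: le_trans (prob_count_neq0_le omega_PPP mA nu_fin) _.
rewrite -nu_fin; apply: le_trans nu_le _.
by rewrite lee_fin le_eqVlt; apply/orP; left; apply/eqP; rewrite mulNr; ring.
Qed.
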